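(* (a) Suppose $a'>a>0$, $c>b>0$ and $\delta>0$. Then the function \[ x\mapsto {}_2F_1(a+\delta,b;c;x)\,{}_2F_1(a',b;c;x)-{}_2F_1(a'+\delta,b;c;x)\,{}_2F_1(a,b;c;x) \] has negative power series coefficients, starting with the coefficient at $x^2$. (b) Let $\delta>0$. The function $a\mapsto{}_2F_1(a,b;c;x)$ is log-convex, i.e. ${}_2F_1(a+\delta,b;c;x)^2\le {}_2F_1(a,b;c;x)\,{}_2F_1(a+2\delta,b;c;x)$, on $(-\infty,\infty)$ for $-\infty<x<1$ and $c>b>0$.
   Context: $(a)_k=a(a+1)\cdots(a+k-1)$ is the Pochhammer symbol; ${}_2F_1(a,b;c;x)=\sum_{k\ge0}\frac{(a)_k(b)_k}{(c)_k k!}x^k$ (for $x<0$ understood via analytic continuation). *)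

From Stdlib Require Import Reals.
From Coquelicot Require Import Coquelicot.
Open Scope R_scope.

Fixpoint poch (a : R) (k : nat) : R :=
  match k with
  | O => 1
  | S k' => poch a k' * (a + INR k')
  end.

Definition hyp_coef (a b c : R) (k : nat) : R :=
  poch a k * poch b k / (poch c k * INR (Factorial.fact k)).

(* The defining power series (meaningful for |x| < 1). *)
Definition hyp_series (a b c x : R) : R :=
  Series (fun k => hyp_coef a b c k * x ^ k).

(* 2F1 on (-oo,1): the power series on (-1,1), and for x <= -1 the analytic
   continuation given by Pfaff's transformation
   2F1(a,b;c;x) = (1-x)^(-b) 2F1(c-a,b;c;x/(x-1)), where x/(x-1) in [1/2,1). *)
Definition F21 (a b c x : R) : R :=
  if Rlt_dec (Rabs x) 1 then hyp_series a b c x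
  else Rpower (1 - x) (- b) * hyp_series (c - a) b c (x / (x - 1)).

Definition cauchy_coef (A B : nat -> R) (n : nat) : R :=
  sum_f_R0 (fun k => A k * B (n - k)%nat) n.

Definition diff_coef (a a' b c d : R) (n : nat) : R :=
  cauchy_coef (hyp_coef (a + d) b c) (hyp_coef a' b c) n
  - cauchy_coef (hyp_coef (a' + d) b c) (hyp_coef a b c) n.

From Stdlib Require Import Reals Lra Lia Factorial.
From Coquelicot Require Import Coquelicot.
Open Scope R_scope.

(* (a) Write g_x(k) = (x)_k / k! and m_k = (b)_k / (c)_k, so that the k-th coefficient of
   2F1(x,b;c;.) is g_x(k) m_k.  By Chu-Vandermonde g_(a+d) is the convolution of g_d and g_a,
   and the n-th coefficient of the difference becomes
     sum_(i+j+q=n) g_d(i) m_(i+j) m_q (g_a(j) g_a'(q) - g_a'(j) g_a(q)).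
   Symmetrising in (j, q) gives products
     (g_a(j) g_a'(q) - g_a'(j) g_a(q)) (m_(i+j) m_q - m_(i+q) m_j) <= 0,
   because both k |-> g_a'(k) / g_a(k) and k |-> m_(i+k) / m_k are nondecreasing; the term
   i = 1, {j, q} = {0, n - 1} is strictly negative.
   (b) For |x| < 1, m_k is the k-th moment of the Beta(b, c - b) law.  Its beta-binomial
   discretisation on the grid j / N has exact factorial moments, hence ordinary moments within
   k^2 / N of m_k, so 2F1(a,b;c;x) is the limit of sum_j w_(N,j) (1 - x j / N)^(-a).  Each such
   sum is log-convex in a by Cauchy-Schwarz, since (1 - z)^(-a) is multiplicative in a.  For
   x <= -1, Pfaff's transformation reduces to the previous case with a replaced by c - a. *)

Lemma poch_pos x k : 0 < x -> 0 < poch x k.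
Proof.
  intro Hx; induction k as [|k IH]; simpl; [lra|].
  apply Rmult_lt_0_compat; [exact IH|]. pose proof (pos_INR k); lra.
Qed.

Lemma poch_add x k i : poch x (k + i) = poch x k * poch (x + INR k) i.
Proof.
  induction i as [|i IH]; simpl; [rewrite Nat.add_0_r; ring|].
  rewrite Nat.add_succ_r; simpl. rewrite IH, plus_INR. ring.
Qed.

Lemma poch_abs x k : Rabs (poch x k) <= poch (Rabs x + 1) k.
Proof.
  induction k as [|k IH]; simpl; [rewrite Rabs_R1; lra|].
  rewrite Rabs_mult. pose proof (pos_INR k).
  assert (Rabs (x + INR k) <= Rabs x + 1 + INR k).
  { pose proof (Rabs_triang x (INR k)). rewrite (Rabs_right (INR k)) in *; lra. }
  apply Rmult_le_compat; auto; apply Rabs_pos.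
Qed.

Lemma INR_fact_pos k : 0 < INR (fact k).
Proof. apply lt_0_INR, lt_O_fact. Qed.

(* [gbinom x k] is the k-th coefficient of (1 - z)^(-x), the binomial coefficient C(x + k - 1, k). *)
Definition gbinom (x : R) (k : nat) : R := poch x k / INR (fact k).

Lemma gbinom_pos x k : 0 < x -> 0 < gbinom x k.
Proof. intro; apply Rdiv_lt_0_compat; [apply poch_pos; auto | apply INR_fact_pos]. Qed.

Lemma gbinom_0 x : gbinom x 0 = 1.
Proof. unfold gbinom; simpl; field. Qed.

Lemma gbinom_S x k : gbinom x (S k) = gbinom x k * (x + INR k) / INR (S k).
Proof.
  unfold gbinom; simpl poch. rewrite fact_simpl, mult_INR.
  pose proof (INR_fact_pos k). assert (0 < INR (S k)) by (apply lt_0_INR; lia).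
  field; lra.
Qed.

Lemma gbinom_S_mul x k : INR (S k) * gbinom x (S k) = gbinom x k * (x + INR k).
Proof. rewrite gbinom_S. assert (0 < INR (S k)) by (apply lt_0_INR; lia). field; lra. Qed.

Lemma gbinom_abs x k : Rabs (gbinom x k) <= gbinom (Rabs x + 1) k.
Proof.
  unfold gbinom, Rdiv. rewrite Rabs_mult, Rabs_inv, (Rabs_right (INR _)).
  - apply Rmult_le_compat_r; [left; apply Rinv_0_lt_compat, INR_fact_pos | apply poch_abs].
  - left; apply INR_fact_pos.
Qed.

Lemma gbinom_vandermonde x y n :
  gbinom (x + y) n = sum_f_R0 (fun k => gbinom x k * gbinom y (n - k)%nat) n.
Proof.
  induction n as [|n IH]; [simpl; rewrite !gbinom_0; lra|].
  assert (Hn : 0 < INR (S n)) by (apply lt_0_INR; lia).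
  apply Rmult_eq_reg_l with (INR (S n)); [| lra].
  rewrite gbinom_S_mul, IH.
  (* Split the factor S n = k + (S n - k) inside the sum and shift each half by one. *)
  assert (E1 : sum_f_R0 (fun k => INR k * (gbinom x k * gbinom y (S n - k)%nat)) (S n)
             = sum_f_R0 (fun i => gbinom x i * (x + INR i) * gbinom y (n - i)%nat) n).
  { rewrite decomp_sum by lia. simpl (INR 0). rewrite Rmult_0_l, Rplus_0_l.
    apply sum_eq; intros i Hi. simpl (S n - S i)%nat. rewrite <- Rmult_assoc, gbinom_S_mul. reflexivity. }
  assert (E2 : sum_f_R0 (fun k => INR (S n - k) * (gbinom x k * gbinom y (S n - k)%nat)) (S n)
             = sum_f_R0 (fun i => gbinom x i * (gbinom y (n - i)%nat * (y + INR (n - i)))) n).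
  { rewrite tech5, Nat.sub_diag. simpl (INR 0). rewrite Rmult_0_l, Rplus_0_r.
    apply sum_eq; intros i Hi. replace (S n - i)%nat with (S (n - i)) by lia.
    rewrite <- gbinom_S_mul. ring. }
  transitivity (sum_f_R0 (fun k => INR k * (gbinom x k * gbinom y (S n - k)%nat)) (S n)
              + sum_f_R0 (fun k => INR (S n - k) * (gbinom x k * gbinom y (S n - k)%nat)) (S n)).
  - rewrite E1, E2, <- plus_sum, Rmult_comm, scal_sum.
    apply sum_eq; intros i Hi. rewrite minus_INR by lia. ring.
  - rewrite <- plus_sum, scal_sum. apply sum_eq; intros i Hi. rewrite minus_INR by lia. ring.
Qed.

Definition poch_ratio (b c : R) (k : nat) : R := poch b k / poch c k.

Lemma poch_ratio_pos b c k : 0 < b -> 0 < c -> 0 < poch_ratio b c k.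
Proof. intros; apply Rdiv_lt_0_compat; apply poch_pos; auto. Qed.

Lemma poch_ratio_0 b c : poch_ratio b c 0 = 1.
Proof. unfold poch_ratio; simpl; field. Qed.

Lemma poch_ratio_S b c k : 0 < c ->
  poch_ratio b c (S k) = poch_ratio b c k * ((b + INR k) / (c + INR k)).
Proof.
  intro Hc. unfold poch_ratio; simpl. pose proof (poch_pos c k Hc). pose proof (pos_INR k).
  field; lra.
Qed.

Lemma poch_ratio_le_1 b c k : 0 < b -> b < c -> poch_ratio b c k <= 1.
Proof.
  intros Hb Hbc. assert (Hle : poch b k <= poch c k).
  { induction k as [|k IH]; simpl; [lra|]. pose proof (pos_INR k).
    apply Rmult_le_compat; try lra. left; apply poch_pos; auto. }
  pose proof (poch_pos c k ltac:(lra)). unfold poch_ratio.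
  apply Rmult_le_reg_r with (poch c k); auto. unfold Rdiv. rewrite Rmult_assoc, Rinv_l; lra.
Qed.

Lemma hyp_coef_gbinom a b c k : 0 < c -> hyp_coef a b c k = gbinom a k * poch_ratio b c k.
Proof.
  intro Hc. unfold hyp_coef, gbinom, poch_ratio.
  pose proof (poch_pos c k Hc). pose proof (INR_fact_pos k). field; lra.
Qed.

Lemma shift_ratio_le b c u v : b < c -> 0 < c + u -> u <= v ->
  (b + u) / (c + u) <= (b + v) / (c + v).
Proof.
  intros Hbc Hu Huv. assert (Hv : 0 < c + v) by lra.
  apply Rmult_le_reg_r with ((c + u) * (c + v)); [nra|].
  replace ((b + u) / (c + u) * ((c + u) * (c + v))) with ((b + u) * (c + v)) by (field; lra).
  replace ((b + v) / (c + v) * ((c + u) * (c + v))) with ((b + v) * (c + u)) by (field; lra).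
  nra.
Qed.

Lemma shift_ratio_lt b c u v : b < c -> 0 < c + u -> u < v ->
  (b + u) / (c + u) < (b + v) / (c + v).
Proof.
  intros Hbc Hu Huv. assert (Hv : 0 < c + v) by lra.
  apply Rmult_lt_reg_r with ((c + u) * (c + v)); [nra|].
  replace ((b + u) / (c + u) * ((c + u) * (c + v))) with ((b + u) * (c + v)) by (field; lra).
  replace ((b + v) / (c + v) * ((c + u) * (c + v))) with ((b + v) * (c + u)) by (field; lra).
  nra.
Qed.

Section RatioMonotone.
Variables f g : nat -> R.
Hypothesis Hf : forall k, 0 < f k.

Lemma ratio_nondecr :
  (forall k, f (S k) * g k <= g (S k) * f k) ->
  forall j q, (j <= q)%nat -> f q * g j <= f j * g q.
Proof.
  intros Hstep j q Hjq. induction Hjq as [|q Hjq IH]; [lra|].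
  apply Rmult_le_reg_r with (f q); [auto|].
  pose proof (Rmult_le_compat_l (f (S q)) _ _ (Rlt_le _ _ (Hf (S q))) IH).
  pose proof (Rmult_le_compat_l (f j) _ _ (Rlt_le _ _ (Hf j)) (Hstep q)).
  lra.
Qed.

Lemma ratio_incr :
  (forall k, f (S k) * g k < g (S k) * f k) ->
  forall j q, (j < q)%nat -> f q * g j < f j * g q.
Proof.
  intros Hstep j q Hjq. induction Hjq as [|q Hjq IH]; [rewrite (Rmult_comm (f j)); apply Hstep|].
  apply Rmult_lt_reg_r with (f q); [auto|].
  pose proof (Rmult_lt_compat_l (f (S q)) _ _ (Hf (S q)) IH).
  pose proof (Rmult_lt_compat_l (f j) _ _ (Hf j) (Hstep q)).
  lra.
Qed.

End RatioMonotone.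

Lemma gbinom_step_lt a a' k : 0 < a -> a < a' ->
  gbinom a (S k) * gbinom a' k < gbinom a' (S k) * gbinom a k.
Proof.
  intros Ha Haa'. rewrite !gbinom_S. unfold Rdiv.
  pose proof (gbinom_pos a k Ha). pose proof (gbinom_pos a' k ltac:(lra)).
  assert (0 < / INR (S k)) by (apply Rinv_0_lt_compat, lt_0_INR; lia).
  assert (0 < gbinom a k * gbinom a' k * / INR (S k)) by (apply Rmult_lt_0_compat; [apply Rmult_lt_0_compat|]; auto).
  nra.
Qed.

Lemma gbinom_cross_le a a' j q : 0 < a -> a < a' -> (j <= q)%nat ->
  gbinom a q * gbinom a' j <= gbinom a j * gbinom a' q.
Proof.
  intros Ha Haa'.
  apply (ratio_nondecr (gbinom a) (gbinom a') (fun k => gbinom_pos a k Ha)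
    (fun k => Rlt_le _ _ (gbinom_step_lt a a' k Ha Haa'))).
Qed.

Lemma gbinom_cross_lt a a' j q : 0 < a -> a < a' -> (j < q)%nat ->
  gbinom a q * gbinom a' j < gbinom a j * gbinom a' q.
Proof.
  intros Ha Haa'.
  apply (ratio_incr (gbinom a) (gbinom a') (fun k => gbinom_pos a k Ha)
    (fun k => gbinom_step_lt a a' k Ha Haa')).
Qed.

Section PochRatioCross.
Variables b c : R.
Hypotheses (Hb : 0 < b) (Hbc : b < c).
Local Notation m := (poch_ratio b c).

Let m_pos k : 0 < m k.
Proof. apply poch_ratio_pos; lra. Qed.

Lemma poch_ratio_step_le k l : (k <= l)%nat -> m (S k) * m l <= m (S l) * m k.
Proof.
  intro Hkl. rewrite !poch_ratio_S by lra.
  pose proof (m_pos k). pose proof (m_pos l). pose proof (pos_INR k).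
  pose proof (shift_ratio_le b c (INR k) (INR l) Hbc ltac:(lra) (le_INR _ _ Hkl)).
  assert (0 < m k * m l) by (apply Rmult_lt_0_compat; auto). nra.
Qed.

Lemma poch_ratio_step_lt k l : (k < l)%nat -> m (S k) * m l < m (S l) * m k.
Proof.
  intro Hkl. rewrite !poch_ratio_S by lra.
  pose proof (m_pos k). pose proof (m_pos l). pose proof (pos_INR k).
  pose proof (shift_ratio_lt b c (INR k) (INR l) Hbc ltac:(lra) (lt_INR _ _ Hkl)).
  assert (0 < m k * m l) by (apply Rmult_lt_0_compat; auto). nra.
Qed.

Lemma poch_ratio_cross_le i j q : (j <= q)%nat -> m (j + i) * m q <= m j * m (q + i).
Proof.
  intro Hjq. rewrite Rmult_comm.
  apply (ratio_nondecr m (fun k => m (k + i)) m_pos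
    (fun k => poch_ratio_step_le k (k + i) ltac:(lia)) j q Hjq).
Qed.

Lemma poch_ratio_cross_lt q : (0 < q)%nat -> m 1 * m q < m 0 * m (S q).
Proof.
  intro Hq. apply (ratio_incr m (fun k => m (k + q)) m_pos
    (fun k => poch_ratio_step_lt k (k + q) ltac:(lia)) 0 1 ltac:(lia)).
Qed.

End PochRatioCross.

Lemma sum_f_R0_nonpos (f : nat -> R) n :
  (forall i, (i <= n)%nat -> f i <= 0) -> sum_f_R0 f n <= 0.
Proof.
  intro H. induction n as [|n IH]; simpl; [apply H; lia|].
  assert (sum_f_R0 f n <= 0) by (apply IH; intros; apply H; lia).
  specialize (H (S n) ltac:(lia)). lra.
Qed.

Lemma sum_f_R0_neg (f : nat -> R) n i0 :
  (forall i, (i <= n)%nat -> f i <= 0) -> (i0 <= n)%nat -> f i0 < 0 -> sum_f_R0 f n < 0.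
Proof.
  intros H Hi0 Hf. induction n as [|n IH]; simpl.
  - replace i0 with 0%nat in Hf by lia. exact Hf.
  - destruct (Nat.eq_dec i0 (S n)) as [->|Hne].
    + assert (sum_f_R0 f n <= 0) by (apply sum_f_R0_nonpos; intros; apply H; lia). lra.
    + assert (sum_f_R0 f n < 0) by (apply IH; [intros; apply H; lia | lia]).
      specialize (H (S n) ltac:(lia)). lra.
Qed.

Lemma sum_antidiag_symmetrize (F : nat -> nat -> R) n :
  sum_f_R0 (fun j => F j (n - j)%nat) n * 2 =
  sum_f_R0 (fun j => F j (n - j)%nat + F (n - j)%nat j) n.
Proof.
  rewrite plus_sum, <- (sum_f_R0_skip (fun j => F (n - j)%nat j) n).
  rewrite (sum_eq (fun k => F (n - (n - k))%nat (n - k)%nat) (fun j => F j (n - j)%nat))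
    by (intros j Hj; f_equal; lia).
  ring.
Qed.

Lemma sum_triangle (h : nat -> nat -> R) n :
  sum_f_R0 (fun p => sum_f_R0 (fun i => h i p) p) n =
  sum_f_R0 (fun i => sum_f_R0 (fun j => h i (i + j)%nat) (n - i)) n.
Proof.
  induction n as [|n IH]; [reflexivity|].
  rewrite (tech5 (fun p => sum_f_R0 (fun i => h i p) p)), IH.
  rewrite (tech5 (fun i => sum_f_R0 (fun j => h i (i + j)%nat) (S n - i))).
  rewrite Nat.sub_diag. simpl (sum_f_R0 _ 0). rewrite Nat.add_0_r, (tech5 (fun i => h i (S n))).
  rewrite (sum_eq (fun i => sum_f_R0 (fun j => h i (i + j)%nat) (S n - i))
                  (fun i => sum_f_R0 (fun j => h i (i + j)%nat) (n - i) + h i (S n))).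
  - rewrite plus_sum. lra.
  - intros i Hi. replace (S n - i)%nat with (S (n - i)) by lia. rewrite tech5.
    replace (i + S (n - i))%nat with (S n) by lia. reflexivity.
Qed.

Section CoefficientSign.
Variables a a' b c d : R.
Hypotheses (Ha : 0 < a) (Haa' : a < a') (Hb : 0 < b) (Hbc : b < c) (Hd : 0 < d).
Local Notation m := (poch_ratio b c).

Definition diff_term (i j q : nat) : R :=
  gbinom d i * (m (i + j) * m q) * (gbinom a j * gbinom a' q - gbinom a' j * gbinom a q).

Lemma diff_coef_triple_sum n : diff_coef a a' b c d n =
  sum_f_R0 (fun i => sum_f_R0 (fun j => diff_term i j (n - i - j)%nat) (n - i)) n.
Proof.
  unfold diff_coef, cauchy_coef. rewrite <- minus_sum.
  set (h := fun i p => gbinom d i * (m p * m (n - p)%nat) *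
        (gbinom a (p - i) * gbinom a' (n - p) - gbinom a' (p - i) * gbinom a (n - p))).
  transitivity (sum_f_R0 (fun i => sum_f_R0 (fun j => h i (i + j)%nat) (n - i)) n).
  - rewrite <- sum_triangle. apply sum_eq; intros p Hp.
    rewrite !hyp_coef_gbinom by lra.
    rewrite (Rplus_comm a d), (Rplus_comm a' d), !gbinom_vandermonde.
    set (S1 := sum_f_R0 (fun k => gbinom d k * gbinom a (p - k)%nat) p).
    set (S2 := sum_f_R0 (fun k => gbinom d k * gbinom a' (p - k)%nat) p).
    transitivity (S1 * (m p * (gbinom a' (n - p) * m (n - p)%nat))
                - S2 * (m p * (gbinom a (n - p) * m (n - p)%nat))); [ring|].
    unfold S1, S2. rewrite !(Rmult_comm (sum_f_R0 _ _)), !scal_sum, <- minus_sum.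
    apply sum_eq; intros i Hi. unfold h. ring.
  - apply sum_eq; intros i Hi. apply sum_eq; intros j Hj. unfold h, diff_term.
    replace (i + j - i)%nat with j by lia. replace (n - (i + j))%nat with (n - i - j)%nat by lia.
    ring.
Qed.

Lemma diff_term_pair_nonpos i j q : diff_term i j q + diff_term i q j <= 0.
Proof.
  unfold diff_term.
  assert (Hdi : 0 < gbinom d i) by (apply gbinom_pos; auto).
  rewrite (Nat.add_comm i j), (Nat.add_comm i q).
  assert (Hprod : (gbinom a j * gbinom a' q - gbinom a' j * gbinom a q) *
                  (m (j + i) * m q - m (q + i) * m j) <= 0).
  { destruct (Nat.le_ge_cases j q) as [Hjq | Hqj].
    - pose proof (gbinom_cross_le a a' j q Ha Haa' Hjq).
      pose proof (poch_ratio_cross_le b c Hb Hbc i j q Hjq). nra.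
    - pose proof (gbinom_cross_le a a' q j Ha Haa' Hqj).
      pose proof (poch_ratio_cross_le b c Hb Hbc i q j Hqj). nra. }
  nra.
Qed.

Lemma diff_term_pair_neg k : diff_term 1 0 (S k) + diff_term 1 (S k) 0 < 0.
Proof.
  unfold diff_term. simpl (1 + _)%nat.
  assert (Hd1 : 0 < gbinom d 1) by (apply gbinom_pos; auto).
  pose proof (gbinom_cross_lt a a' 0 (S k) Ha Haa' ltac:(lia)).
  pose proof (poch_ratio_cross_lt b c Hb Hbc (S k) ltac:(lia)).
  assert (Hprod : (gbinom a 0 * gbinom a' (S k) - gbinom a' 0 * gbinom a (S k)) *
                  (m 1 * m (S k) - m (S (S k)) * m 0) < 0) by nra.
  nra.
Qed.

Lemma diff_coef_neg n : (2 <= n)%nat -> diff_coef a a' b c d n < 0.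
Proof.
  intro Hn. rewrite diff_coef_triple_sum.
  apply Rmult_lt_reg_r with 2; [lra|]. rewrite Rmult_0_l, (Rmult_comm _ 2), scal_sum.
  apply sum_f_R0_neg with (i0 := 1%nat); [intros i Hi | lia |].
  all: rewrite (sum_antidiag_symmetrize (diff_term _)).
  - apply sum_f_R0_nonpos; intros j Hj. apply diff_term_pair_nonpos.
  - apply sum_f_R0_neg with (i0 := 0%nat); [intros j Hj | lia |].
    + apply diff_term_pair_nonpos.
    + replace (n - 1 - 0)%nat with (S (n - 2)) by lia. apply diff_term_pair_neg.
Qed.

Lemma diff_coef_0_1 : diff_coef a a' b c d 0 = 0 /\ diff_coef a a' b c d 1 = 0.
Proof.
  unfold diff_coef, cauchy_coef. simpl. rewrite !hyp_coef_gbinom by lra.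
  rewrite !gbinom_S, !gbinom_0, !poch_ratio_S, !poch_ratio_0 by lra. simpl. split; field; lra.
Qed.

End CoefficientSign.

Fixpoint fall (x : R) (k : nat) : R :=
  match k with O => 1 | S k' => fall x k' * (x - INR k') end.

Lemma fall_INR_fact k i : fall (INR (k + i)) k * INR (fact i) = INR (fact (k + i)).
Proof.
  revert i. induction k as [|k IH]; intro i; [simpl; ring|].
  replace (S k + i)%nat with (k + S i)%nat by lia. simpl fall.
  specialize (IH (S i)). rewrite fact_simpl, mult_INR in IH.
  replace (INR (k + S i) - INR k) with (INR (S i)) by (rewrite plus_INR; ring).
  rewrite <- IH. ring.
Qed.

Lemma fall_INR_lt j k : (j < k)%nat -> fall (INR j) k = 0.
Proof.
  induction k as [|k IH]; intro H; [lia|]. simpl.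
  destruct (Nat.eq_dec j k) as [->|Hne]; [ring|]. rewrite IH by lia. ring.
Qed.

Lemma fall_INR_pos N k : (k <= N)%nat -> 0 < fall (INR N) k.
Proof.
  induction k as [|k IH]; intro H; simpl; [lra|].
  apply Rmult_lt_0_compat; [apply IH; lia|]. apply lt_INR in H. lra.
Qed.

Lemma gbinom_fall x k i :
  gbinom x (k + i) * fall (INR (k + i)) k = poch x k * gbinom (x + INR k) i.
Proof.
  unfold gbinom. rewrite poch_add, <- (fall_INR_fact k i).
  pose proof (INR_fact_pos i). pose proof (fall_INR_pos (k + i) k ltac:(lia)).
  field. lra.
Qed.

Lemma sum_f_R0_drop_zeros (F : nat -> R) k N :
  (forall j, (j < k)%nat -> F j = 0) -> (k <= N)%nat ->
  sum_f_R0 F N = sum_f_R0 (fun i => F (k + i)%nat) (N - k).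
Proof.
  intros H HkN. destruct k as [|k].
  - rewrite Nat.sub_0_r. reflexivity.
  - rewrite (tech2 F k N) by lia.
    rewrite (sum_eq F (fun _ => 0)) by (intros j Hj; apply H; lia).
    rewrite sum_cte. ring.
Qed.

Definition grid (N j : nat) : R := INR j / INR N.

Lemma grid_01 N j : (1 <= N)%nat -> (j <= N)%nat -> 0 <= grid N j <= 1.
Proof.
  intros HN Hj. unfold grid. apply le_INR in Hj. apply le_INR in HN. simpl in HN.
  pose proof (pos_INR j). split; [apply Rdiv_le_0_compat; lra|].
  apply Rmult_le_reg_r with (INR N); [lra|]. unfold Rdiv. rewrite Rmult_assoc, Rinv_l; lra.
Qed.

Lemma pow_sub_prod_step u t r e k :
  0 <= t <= u -> u <= 1 -> 0 <= r <= u ^ k -> u ^ k - r <= e ->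
  0 <= r * t <= u ^ S k /\ u ^ S k - r * t <= e + (u - t).
Proof.
  intros Ht Hu Hr He. simpl pow.
  assert (u ^ k <= 1) by (rewrite <- (pow1 k); apply pow_incr; lra).
  split; [split; [nra | rewrite (Rmult_comm u); apply Rmult_le_compat; lra] | nra].
Qed.

Lemma grid_step_bounds J K N : 0 <= K <= J -> J <= N -> K < N ->
  0 <= (J - K) / (N - K) <= J / N /\ J / N - (J - K) / (N - K) <= K / N.
Proof.
  intros HKJ HJN HKN.
  assert (HN : 0 < N) by lra.
  replace (J / N - (J - K) / (N - K)) with (K * (N - J) / (N * (N - K))) by (field; lra).
  split; [split|].
  - apply Rdiv_le_0_compat; lra.
  - apply Rmult_le_reg_r with (N * (N - K)); [nra|].
    replace ((J - K) / (N - K) * (N * (N - K))) with ((J - K) * N) by (field; lra).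
    replace (J / N * (N * (N - K))) with (J * (N - K)) by (field; lra). nra.
  - apply Rmult_le_reg_r with (N * (N - K)); [nra|].
    replace (K * (N - J) / (N * (N - K)) * (N * (N - K))) with (K * (N - J)) by (field; lra).
    replace (K / N * (N * (N - K))) with (K * (N - K)) by (field; lra). nra.
Qed.

Lemma fall_ratio_approx N j k : (1 <= N)%nat -> (j <= N)%nat -> (k <= N)%nat ->
  0 <= fall (INR j) k / fall (INR N) k <= grid N j ^ k /\
  grid N j ^ k - fall (INR j) k / fall (INR N) k <= INR k ^ 2 / INR N.
Proof.
  intros HN HjN. induction k as [|k IH]; intro HkN.
  { simpl. unfold Rdiv. rewrite Rinv_1, Rmult_0_l. lra. }
  specialize (IH ltac:(lia)).
  pose proof (grid_01 N j HN HjN) as Hu. unfold grid in *.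
  pose proof (le_INR _ _ HN) as HN'. simpl (INR 1) in HN'.
  pose proof (le_INR _ _ HjN). pose proof (pos_INR j). pose proof (pos_INR k).
  assert (HkN' : INR k + 1 <= INR N) by (rewrite <- S_INR; apply le_INR; lia).
  assert (Hsq : INR k ^ 2 / INR N + INR k / INR N <= INR (S k) ^ 2 / INR N).
  { rewrite S_INR. unfold Rdiv. rewrite <- Rmult_plus_distr_r.
    apply Rmult_le_compat_r; [left; apply Rinv_0_lt_compat; lra | nra]. }
  destruct (Compare_dec.le_lt_dec k j) as [Hkj | Hkj].
  - apply le_INR in Hkj.
    replace (fall (INR j) (S k) / fall (INR N) (S k)) with
      (fall (INR j) k / fall (INR N) k * ((INR j - INR k) / (INR N - INR k))).
    2: { simpl fall. pose proof (fall_INR_pos N k ltac:(lia)). field. lra. }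
    destruct (grid_step_bounds (INR j) (INR k) (INR N)) as [Ht Hut]; [lra | lra | lra |].
    destruct IH as [Hr He].
    destruct (pow_sub_prod_step _ _ _ _ k Ht ltac:(lra) Hr He). split; [auto | lra].
  - rewrite (fall_INR_lt j (S k)) by lia. unfold Rdiv. rewrite Rmult_0_l, Rminus_0_r.
    apply lt_INR in Hkj. unfold Rdiv in Hu. rewrite <- (tech_pow_Rmult (INR j * / INR N) k).
    assert (Hk1 : 0 <= (INR j * / INR N) ^ k <= 1).
    { split; [apply pow_le; lra | rewrite <- (pow1 k); apply pow_incr; lra]. }
    assert (INR j * / INR N <= INR (S k) ^ 2 * / INR N).
    { rewrite S_INR. apply Rmult_le_compat_r; [left; apply Rinv_0_lt_compat; lra | nra]. }
    assert (INR j * / INR N * (INR j * / INR N) ^ k <= INR j * / INR N).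
    { apply Rle_trans with (INR j * / INR N * 1); [apply Rmult_le_compat_l | ]; lra. }
    split; [split; [lra | apply Rmult_le_pos; lra] | lra].
Qed.

Section BetaBinomial.
Variables b c : R.
Hypotheses (Hb : 0 < b) (Hbc : b < c).

(* The beta-binomial law on {0, ..., N}, whose rescaling j / N tends to Beta(b, c - b). *)
Definition beta_binom (N j : nat) : R := gbinom b j * gbinom (c - b) (N - j) / gbinom c N.

Definition beta_binom_moment (N k : nat) : R :=
  sum_f_R0 (fun j => beta_binom N j * grid N j ^ k) N.

Lemma beta_binom_nonneg N j : 0 <= beta_binom N j.
Proof.
  left. apply Rdiv_lt_0_compat; [apply Rmult_lt_0_compat|]; apply gbinom_pos; lra.
Qed.

Lemma beta_binom_sum N : sum_f_R0 (beta_binom N) N = 1.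
Proof.
  unfold beta_binom. pose proof (gbinom_pos c N ltac:(lra)).
  pose proof (gbinom_vandermonde b (c - b) N) as E. replace (b + (c - b)) with c in E by ring.
  unfold Rdiv. rewrite <- (scal_sum (fun j => gbinom b j * gbinom (c - b) (N - j)%nat) N).
  rewrite <- E. field. lra.
Qed.

Lemma beta_binom_factorial_moment N k : (k <= N)%nat ->
  sum_f_R0 (fun j => beta_binom N j * (fall (INR j) k / fall (INR N) k)) N = poch_ratio b c k.
Proof.
  intro HkN.
  pose proof (gbinom_pos c N ltac:(lra)). pose proof (fall_INR_pos N k HkN).
  transitivity (sum_f_R0 (fun j => gbinom b j * gbinom (c - b) (N - j) * fall (INR j) k) N
                * / (gbinom c N * fall (INR N) k)).
  { rewrite Rmult_comm, scal_sum. apply sum_eq; intros j Hj. unfold beta_binom. field. lra. }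
  rewrite (sum_f_R0_drop_zeros _ k N) by (auto; intros j Hj; rewrite fall_INR_lt by auto; ring).
  rewrite (sum_eq _ (fun i => poch b k * (gbinom (b + INR k) i * gbinom (c - b) (N - k - i))))
    by (intros i Hi; rewrite (Rmult_comm (gbinom b (k + i))), Rmult_assoc, gbinom_fall;
        replace (N - (k + i))%nat with (N - k - i)%nat by lia; ring).
  rewrite (sum_eq _ (fun i => gbinom (b + INR k) i * gbinom (c - b) (N - k - i)%nat * poch b k))
    by (intros; ring).
  rewrite <- scal_sum, <- gbinom_vandermonde.
  replace (b + INR k + (c - b)) with (c + INR k) by ring.
  replace (gbinom c N * fall (INR N) k) with (poch c k * gbinom (c + INR k) (N - k))
    by (rewrite <- gbinom_fall; replace (k + (N - k))%nat with N by lia; reflexivity).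
  unfold poch_ratio. pose proof (poch_pos c k ltac:(lra)).
  pose proof (gbinom_pos (c + INR k) (N - k) ltac:(pose proof (pos_INR k); lra)).
  field. lra.
Qed.

Lemma beta_binom_moment_approx N k : (1 <= N)%nat ->
  Rabs (poch_ratio b c k - beta_binom_moment N k) <= INR k ^ 2 / INR N.
Proof.
  intro HN. pose proof (le_INR _ _ HN) as HN'. simpl (INR 1) in HN'.
  pose proof (beta_binom_nonneg N) as Hw.
  destruct (Compare_dec.le_lt_dec k N) as [HkN | HkN].
  - rewrite <- (beta_binom_factorial_moment N k HkN). unfold beta_binom_moment.
    rewrite <- minus_sum. apply Rabs_le_between. split.
    + rewrite <- (Rmult_1_r (- _)), <- (beta_binom_sum N), scal_sum.
      apply sum_Rle; intros j Hj. pose proof (Hw j).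
      destruct (fall_ratio_approx N j k HN Hj HkN). nra.
    + apply Rle_trans with 0; [| apply Rdiv_le_0_compat; [apply pow_le, pos_INR | lra]].
      apply sum_f_R0_nonpos; intros j Hj. pose proof (Hw j).
      destruct (fall_ratio_approx N j k HN Hj HkN). nra.
  - (* Beyond N both moments lie in [0, 1] while the bound exceeds 1. *)
    assert (HM : 0 <= beta_binom_moment N k <= 1).
    { assert (Hu : forall j, (j <= N)%nat -> 0 <= grid N j ^ k <= 1).
      { intros j Hj. pose proof (grid_01 N j HN Hj).
        split; [apply pow_le; lra | rewrite <- (pow1 k); apply pow_incr; lra]. }
      unfold beta_binom_moment. split.
      - apply cond_pos_sum; intro j. apply Rmult_le_pos; [apply Hw|].
        apply pow_le, Rdiv_le_0_compat; [apply pos_INR | lra].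
      - rewrite <- (beta_binom_sum N). apply sum_Rle; intros j Hj.
        pose proof (Hw j). pose proof (Hu j Hj). nra. }
    pose proof (poch_ratio_le_1 b c k Hb Hbc). pose proof (poch_ratio_pos b c k Hb ltac:(lra)).
    apply lt_INR in HkN.
    assert (1 <= INR k ^ 2 / INR N).
    { apply Rmult_le_reg_r with (INR N); [lra|]. unfold Rdiv. rewrite Rmult_assoc, Rinv_l; nra. }
    apply Rabs_le_between. lra.
Qed.

End BetaBinomial.

Lemma is_lim_seq_inv_S : is_lim_seq (fun n => / INR (S n)) 0.
Proof.
  assert (H : is_lim_seq (fun n => INR (S n)) p_infty).
  { apply (is_lim_seq_incr_1 INR). apply is_lim_seq_INR. }
  apply is_lim_seq_inv in H; [exact H | discriminate].
Qed.

Lemma ex_series_Rabs_le (f g : nat -> R) :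
  (forall k, Rabs (f k) <= g k) -> ex_series g -> ex_series (fun k => Rabs (f k)).
Proof.
  intros H Hg. apply (@ex_series_le R_AbsRing R_CompleteNormedModule) with g; auto.
  intro n. change (norm (Rabs (f n))) with (Rabs (Rabs (f n))). rewrite Rabs_Rabsolu. apply H.
Qed.

Definition binom_majorant (be rho : R) (k : nat) : R := (INR k + 1) ^ 2 * gbinom be k * rho ^ k.

Lemma ex_series_binom_majorant be rho : 0 < be -> 0 < rho < 1 -> ex_series (binom_majorant be rho).
Proof.
  intros Hbe Hr.
  assert (Hpos : forall k, 0 < binom_majorant be rho k).
  { intro k. unfold binom_majorant. pose proof (pos_INR k).
    apply Rmult_lt_0_compat; [apply Rmult_lt_0_compat|]; [apply pow_lt; lra | apply gbinom_pos; auto | apply pow_lt; lra]. }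
  apply ex_series_ext with (fun k => Rabs (binom_majorant be rho k)).
  { intro; apply Rabs_right, Rle_ge, Rlt_le, Hpos. }
  apply ex_series_DAlembert with rho; [lra | intro n; specialize (Hpos n); lra |].
  apply is_lim_seq_ext with
    (fun n => (1 + / INR (S n)) * (1 + / INR (S n)) * (1 + (be - 1) * / INR (S n)) * rho).
  { intro n. rewrite Rabs_right by (left; apply Rdiv_lt_0_compat; auto).
    unfold binom_majorant. rewrite gbinom_S, S_INR. simpl pow.
    pose proof (pos_INR n). pose proof (gbinom_pos be n Hbe).
    field. repeat split; try lra. apply pow_nonzero; lra. }
  assert (L : is_lim_seq (fun n => / INR (S n)) 0) by exact is_lim_seq_inv_S.
  assert (L1 : is_lim_seq (fun n => 1 + / INR (S n)) (1 + 0))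
    by (apply is_lim_seq_plus'; [apply is_lim_seq_const | exact L]).
  assert (L2 : is_lim_seq (fun n => 1 + (be - 1) * / INR (S n)) (1 + (be - 1) * 0)).
  { apply is_lim_seq_plus'; [apply is_lim_seq_const|].
    apply is_lim_seq_mult'; [apply is_lim_seq_const | exact L]. }
  pose proof (is_lim_seq_mult' _ _ _ _ (is_lim_seq_mult' _ _ _ _ (is_lim_seq_mult' _ _ _ _ L1 L1) L2)
    (is_lim_seq_const rho)) as L3.
  replace ((1 + 0) * (1 + 0) * (1 + (be - 1) * 0) * rho) with rho in L3 by ring.
  exact L3.
Qed.

Lemma binom_term_le_majorant al z k : Rabs z < 1 ->
  INR k ^ 2 * Rabs (gbinom al k * z ^ k) <= binom_majorant (Rabs al + 1) ((1 + Rabs z) / 2) k /\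
  Rabs (gbinom al k * z ^ k) <= binom_majorant (Rabs al + 1) ((1 + Rabs z) / 2) k.
Proof.
  intro Hz. unfold binom_majorant. rewrite Rabs_mult, <- RPow_abs.
  pose proof (gbinom_abs al k). pose proof (Rabs_pos (gbinom al k)). pose proof (Rabs_pos z).
  pose proof (pos_INR k).
  assert (Hp : Rabs z ^ k <= ((1 + Rabs z) / 2) ^ k) by (apply pow_incr; lra).
  assert (0 <= Rabs z ^ k) by (apply pow_le; lra).
  assert (X : Rabs (gbinom al k) * Rabs z ^ k <= gbinom (Rabs al + 1) k * ((1 + Rabs z) / 2) ^ k)
    by (apply Rmult_le_compat; auto).
  assert (0 <= Rabs (gbinom al k) * Rabs z ^ k) by (apply Rmult_le_pos; auto).
  assert (1 <= (INR k + 1) ^ 2) by nra. assert (INR k ^ 2 <= (INR k + 1) ^ 2) by nra.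
  split; nra.
Qed.

Lemma ex_series_binom_abs_sq al z : Rabs z < 1 ->
  ex_series (fun k => INR k ^ 2 * Rabs (gbinom al k * z ^ k)).
Proof.
  intro Hz.
  assert (Hnn : forall k, 0 <= INR k ^ 2 * Rabs (gbinom al k * z ^ k))
    by (intro k; apply Rmult_le_pos; [apply pow_le, pos_INR | apply Rabs_pos]).
  apply ex_series_ext with (fun k => Rabs (INR k ^ 2 * Rabs (gbinom al k * z ^ k)));
    [intro k; apply Rabs_right, Rle_ge, Hnn|].
  apply ex_series_Rabs_le with (binom_majorant (Rabs al + 1) ((1 + Rabs z) / 2)).
  - intro k. rewrite Rabs_right by (apply Rle_ge, Hnn). apply binom_term_le_majorant, Hz.
  - apply ex_series_binom_majorant; pose proof (Rabs_pos al); pose proof (Rabs_pos z); lra.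
Qed.

Lemma ex_series_binom_abs al z : Rabs z < 1 -> ex_series (fun k => Rabs (gbinom al k * z ^ k)).
Proof.
  intro Hz. apply ex_series_Rabs_le with (binom_majorant (Rabs al + 1) ((1 + Rabs z) / 2)).
  - intro k. apply binom_term_le_majorant, Hz.
  - apply ex_series_binom_majorant; pose proof (Rabs_pos al); pose proof (Rabs_pos z); lra.
Qed.

(* [binom_series z x] is (1 - z)^(-x) for |z| < 1. *)
Definition binom_series (z x : R) : R := Series (fun k => gbinom x k * z ^ k).

Lemma binom_series_mul z x y : Rabs z < 1 ->
  binom_series z x * binom_series z y = binom_series z (x + y).
Proof.
  intro Hz. unfold binom_series. symmetry. apply is_series_unique.
  eapply is_series_ext; [| apply (is_series_mult (fun k => gbinom x k * z ^ k) (fun k => gbinom y k * z ^ k));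
    try apply Series_correct, ex_series_Rabs; apply ex_series_binom_abs, Hz].
  intro n. rewrite gbinom_vandermonde, (Rmult_comm (sum_f_R0 _ _)), scal_sum.
  apply sum_eq; intros i Hi.
  replace (z ^ n) with (z ^ i * z ^ (n - i)) by (rewrite <- pow_add; f_equal; lia). ring.
Qed.

Lemma Series_sum_f_R0 (f : nat -> nat -> R) n : (forall j, (j <= n)%nat -> ex_series (f j)) ->
  sum_f_R0 (fun j => Series (f j)) n = Series (fun k => sum_f_R0 (fun j => f j k) n) /\
  ex_series (fun k => sum_f_R0 (fun j => f j k) n).
Proof.
  intro H. induction n as [|n IH]; simpl; [split; [reflexivity | apply H; lia]|].
  destruct IH as [IHeq IHex]; [intros; apply H; lia|].
  split.
  - rewrite IHeq, Series_plus; [reflexivity | exact IHex | apply H; lia].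
  - apply (ex_series_plus (V := R_NormedModule)); [exact IHex | apply H; lia].
Qed.

Lemma weighted_cauchy_schwarz (w u v : nat -> R) n : (forall i, (i <= n)%nat -> 0 <= w i) ->
  (sum_f_R0 (fun i => w i * u i * v i) n) ^ 2 <=
  sum_f_R0 (fun i => w i * u i * u i) n * sum_f_R0 (fun i => w i * v i * v i) n.
Proof.
  intro Hw.
  set (P := sum_f_R0 (fun i => w i * u i * u i) n).
  set (B := sum_f_R0 (fun i => w i * u i * v i) n).
  set (Q := sum_f_R0 (fun i => w i * v i * v i) n).
  assert (Hq : forall s t, 0 <= s ^ 2 * P + 2 * s * t * B + t ^ 2 * Q).
  { intros s t.
    replace (s ^ 2 * P + 2 * s * t * B + t ^ 2 * Q)
      with (sum_f_R0 (fun i => w i * (s * u i + t * v i) ^ 2) n).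
    - apply Rle_trans with (sum_f_R0 (fun _ => 0) n); [rewrite sum_cte; lra|].
      apply sum_Rle; intros i Hi. apply Rmult_le_pos; [apply Hw; auto | apply pow2_ge_0].
    - unfold P, B, Q. rewrite !scal_sum, <- !plus_sum. apply sum_eq; intros; ring. }
  assert (HP : 0 <= P) by (specialize (Hq 1 0); simpl in Hq; lra).
  assert (HQ : 0 <= Q) by (specialize (Hq 0 1); simpl in Hq; lra).
  simpl. destruct (Rle_lt_or_eq_dec 0 Q HQ) as [HQ' | HQ'].
  - specialize (Hq Q (- B)). simpl in Hq.
    assert (0 <= Q * (Q * P - B * B)) by nra. nra.
  - destruct (Rle_lt_or_eq_dec 0 P HP) as [HP' | HP'].
    + specialize (Hq (- B) P). simpl in Hq.
      assert (0 <= P * (P * Q - B * B)) by nra. nra.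
    + pose proof (Hq 1 1). pose proof (Hq 1 (-1)). simpl in *.
      assert (B = 0) by nra. rewrite <- HQ', <- HP'. nra.
Qed.

Section DiscreteApproximation.
Variables b c y : R.
Hypotheses (Hb : 0 < b) (Hbc : b < c) (Hy : Rabs y < 1).

(* Replacing the Beta(b, c - b) law in Euler's integral by the beta-binomial law on the grid j / N. *)
Definition approx_hyp (N : nat) (x : R) : R :=
  sum_f_R0 (fun j => beta_binom b c N j * binom_series (y * grid N j) x) N.

Lemma Rabs_mul_grid_lt_1 N j : (1 <= N)%nat -> (j <= N)%nat -> Rabs (y * grid N j) < 1.
Proof.
  intros HN Hj. pose proof (grid_01 N j HN Hj).
  rewrite Rabs_mult, (Rabs_right (grid N j)) by lra. pose proof (Rabs_pos y). nra.
Qed.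

Lemma approx_hyp_Series N x : (1 <= N)%nat ->
  approx_hyp N x = Series (fun k => gbinom x k * y ^ k * beta_binom_moment b c N k).
Proof.
  intro HN. unfold approx_hyp, binom_series.
  rewrite (sum_eq _ (fun j => Series (fun k => beta_binom b c N j * (gbinom x k * (y * grid N j) ^ k))))
    by (intros j Hj; rewrite Series_scal_l; reflexivity).
  assert (Hex : forall j, (j <= N)%nat ->
    ex_series (fun k => beta_binom b c N j * (gbinom x k * (y * grid N j) ^ k))).
  { intros j Hj. apply (ex_series_scal_l (V := R_NormedModule)), ex_series_Rabs.
    apply ex_series_binom_abs, Rabs_mul_grid_lt_1; auto. }
  rewrite (proj1 (Series_sum_f_R0 _ N Hex)).
  apply Series_ext; intro k. unfold beta_binom_moment.
  rewrite scal_sum.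
  apply sum_eq; intros j Hj. rewrite Rpow_mult_distr. ring.
Qed.

Lemma approx_hyp_error N x : (1 <= N)%nat ->
  Rabs (hyp_series x b c y - approx_hyp N x) <=
  Series (fun k => INR k ^ 2 * Rabs (gbinom x k * y ^ k)) / INR N.
Proof.
  intro HN. pose proof (le_INR _ _ HN) as HN'. simpl (INR 1) in HN'.
  rewrite approx_hyp_Series by exact HN. unfold hyp_series.
  rewrite (Series_ext _ (fun k => gbinom x k * y ^ k * poch_ratio b c k))
    by (intro; rewrite hyp_coef_gbinom by lra; ring).
  set (t := fun k => gbinom x k * y ^ k).
  set (e := fun k => t k * (poch_ratio b c k - beta_binom_moment b c N k)).
  set (g := fun k => INR k ^ 2 * Rabs (t k) * / INR N).
  assert (He : forall k, Rabs (e k) <= g k).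
  { intro k. unfold e, g. rewrite Rabs_mult.
    replace (INR k ^ 2 * Rabs (t k) * / INR N) with (Rabs (t k) * (INR k ^ 2 / INR N))
      by (unfold Rdiv; ring).
    apply Rmult_le_compat_l; [apply Rabs_pos | apply beta_binom_moment_approx; auto]. }
  assert (Eg : ex_series g).
  { apply ex_series_ext with (fun k => scal (/ INR N) (INR k ^ 2 * Rabs (t k))).
    - intro; unfold g, scal; simpl; unfold mult; simpl; ring.
    - apply (ex_series_scal_l (V := R_NormedModule)), ex_series_binom_abs_sq, Hy. }
  assert (Ee : ex_series (fun k => Rabs (e k))) by (apply ex_series_Rabs_le with g; auto).
  assert (Em : ex_series (fun k => t k * poch_ratio b c k)).
  { apply ex_series_Rabs, ex_series_Rabs_le with (fun k => Rabs (t k)); [| apply ex_series_binom_abs, Hy].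
    intro k. rewrite Rabs_mult, (Rabs_right (poch_ratio b c k)) by (left; apply poch_ratio_pos; lra).
    pose proof (poch_ratio_le_1 b c k Hb Hbc). pose proof (Rabs_pos (t k)). nra. }
  assert (EM : ex_series (fun k => t k * beta_binom_moment b c N k)).
  { apply ex_series_ext with (fun k => plus (t k * poch_ratio b c k) (opp (e k))).
    - intro k. unfold e, plus, opp; simpl. unfold plus, opp; simpl. ring.
    - apply (ex_series_minus (V := R_NormedModule)); [exact Em | apply ex_series_Rabs, Ee]. }
  rewrite <- Series_minus by auto. rewrite (Series_ext _ e) by (intro; unfold e, t; ring).
  apply Rle_trans with (Series (fun k => Rabs (e k))); [apply Series_Rabs, Ee|].
  apply Rle_trans with (Series g); [apply Series_le; auto; intro; split; [apply Rabs_pos | apply He]|].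
  unfold g, t, Rdiv. rewrite Series_scal_r. lra.
Qed.

Lemma approx_hyp_log_convex N x d : (1 <= N)%nat ->
  approx_hyp N (x + d) ^ 2 <= approx_hyp N x * approx_hyp N (x + 2 * d).
Proof.
  intro HN. unfold approx_hyp.
  set (u := fun j => binom_series (y * grid N j) (x / 2)).
  set (v := fun j => binom_series (y * grid N j) (x / 2 + d)).
  assert (Hsplit : forall j s t, (j <= N)%nat ->
    binom_series (y * grid N j) s * binom_series (y * grid N j) t = binom_series (y * grid N j) (s + t))
    by (intros; apply binom_series_mul, Rabs_mul_grid_lt_1; auto).
  rewrite (sum_eq _ (fun j => beta_binom b c N j * u j * v j))
    by (intros j Hj; unfold u, v; rewrite Rmult_assoc, Hsplit by exact Hj; do 2 f_equal; field).
  rewrite (sum_eq (fun j => beta_binom b c N j * binom_series _ x) (fun j => beta_binom b c N j * u j * u j))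
    by (intros j Hj; unfold u; rewrite Rmult_assoc, Hsplit by exact Hj; do 2 f_equal; field).
  rewrite (sum_eq (fun j => beta_binom b c N j * binom_series _ (x + 2 * d)) (fun j => beta_binom b c N j * v j * v j))
    by (intros j Hj; unfold v; rewrite Rmult_assoc, Hsplit by exact Hj; do 2 f_equal; field).
  apply weighted_cauchy_schwarz. intros; apply beta_binom_nonneg; auto.
Qed.

Lemma is_lim_seq_approx_hyp x : is_lim_seq (fun N => approx_hyp (S N) x) (hyp_series x b c y).
Proof.
  set (D := Series (fun k => INR k ^ 2 * Rabs (gbinom x k * y ^ k))).
  apply is_lim_seq_le_le with (u := fun N => hyp_series x b c y - D * / INR (S N))
                              (w := fun N => hyp_series x b c y + D * / INR (S N)).
  - intro N. pose proof (approx_hyp_error (S N) x ltac:(lia)) as H. fold D in H.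
    apply Rabs_le_between in H. unfold Rdiv in H. lra.
  - replace (Finite (hyp_series x b c y)) with (Rbar_minus (hyp_series x b c y) (Rbar_mult D 0))
      by (simpl; f_equal; ring).
    apply is_lim_seq_minus'; [apply is_lim_seq_const|].
    apply is_lim_seq_mult'; [apply is_lim_seq_const | apply is_lim_seq_inv_S].
  - replace (Finite (hyp_series x b c y)) with (Rbar_plus (hyp_series x b c y) (Rbar_mult D 0))
      by (simpl; f_equal; ring).
    apply is_lim_seq_plus'; [apply is_lim_seq_const|].
    apply is_lim_seq_mult'; [apply is_lim_seq_const | apply is_lim_seq_inv_S].
Qed.

Lemma hyp_series_log_convex x d :
  hyp_series (x + d) b c y ^ 2 <= hyp_series x b c y * hyp_series (x + 2 * d) b c y.
Proof.
  replace (hyp_series (x + d) b c y ^ 2) with (hyp_series (x + d) b c y * hyp_series (x + d) b c y)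
    by ring.
  apply (is_lim_seq_le (fun N => approx_hyp (S N) (x + d) * approx_hyp (S N) (x + d))
                       (fun N => approx_hyp (S N) x * approx_hyp (S N) (x + 2 * d))
                       (hyp_series (x + d) b c y * hyp_series (x + d) b c y)
                       (hyp_series x b c y * hyp_series (x + 2 * d) b c y)).
  - intro N. pose proof (approx_hyp_log_convex (S N) x d ltac:(lia)). lra.
  - apply is_lim_seq_mult'; apply is_lim_seq_approx_hyp.
  - apply is_lim_seq_mult'; apply is_lim_seq_approx_hyp.
Qed.

End DiscreteApproximation.

Lemma pfaff_arg_bounds x : x <= -1 -> Rabs (x / (x - 1)) < 1.
Proof.
  intro Hx. assert (0 < x / (x - 1) < 1).
  { split; [apply Rdiv_neg_neg; lra|].
    apply Rmult_lt_reg_r with (1 - x); [lra|].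
    replace (x / (x - 1) * (1 - x)) with (- x) by (field; lra). lra. }
  rewrite Rabs_right; lra.
Qed.

Lemma F21_log_convex a b c d x : x < 1 -> 0 < b -> b < c ->
  F21 (a + d) b c x ^ 2 <= F21 a b c x * F21 (a + 2 * d) b c x.
Proof.
  intros Hx Hb Hbc. unfold F21.
  destruct (Rlt_dec (Rabs x) 1) as [Hax | Hax]; [apply hyp_series_log_convex; auto|].
  assert (Hy : Rabs (x / (x - 1)) < 1).
  { apply pfaff_arg_bounds. destruct (Rle_dec x (-1)) as [|Hx']; [auto|].
    exfalso. apply Hax, Rabs_def1; lra. }
  pose proof (hyp_series_log_convex b c _ Hb Hbc Hy (c - a - 2 * d) d) as H.
  replace (c - a - 2 * d + d) with (c - (a + d)) in H by ring.
  replace (c - a - 2 * d + 2 * d) with (c - a) in H by ring.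
  replace (c - a - 2 * d) with (c - (a + 2 * d)) in H by ring.
  set (P := Rpower (1 - x) (- b)).
  assert (0 <= P * P) by (apply Rle_0_sqr).
  replace ((P * hyp_series (c - (a + d)) b c (x / (x - 1))) ^ 2)
    with (P * P * hyp_series (c - (a + d)) b c (x / (x - 1)) ^ 2) by ring.
  replace (P * hyp_series (c - a) b c (x / (x - 1)) * (P * hyp_series (c - (a + 2 * d)) b c (x / (x - 1))))
    with (P * P * (hyp_series (c - (a + 2 * d)) b c (x / (x - 1)) * hyp_series (c - a) b c (x / (x - 1))))
    by ring.
  apply Rmult_le_compat_l; auto.
Qed.

Theorem theorem7 :
  (forall a a' b c d : R, 0 < a -> a < a' -> 0 < b -> b < c -> 0 < d ->
     diff_coef a a' b c d 0 = 0 /\ diff_coef a a' b c d 1 = 0 /\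
     (forall n : nat, (2 <= n)%nat -> diff_coef a a' b c d n < 0))
  /\
  (forall a b c d x : R, 0 < d -> x < 1 -> 0 < b -> b < c ->
     (F21 (a + d) b c x) ^ 2 <= F21 a b c x * F21 (a + 2 * d) b c x).
Proof.
  split.
  - intros a a' b c d Ha Haa' Hb Hbc Hd.
    destruct (diff_coef_0_1 a a' b c d Hb Hbc) as [H0 H1].
    split; [exact H0 | split; [exact H1 |]].
    intros n Hn. exact (diff_coef_neg a a' b c d Ha Haa' Hb Hbc Hd n Hn).
  - intros a b c d x _ Hx Hb Hbc. exact (F21_log_convex a b c d x Hx Hb Hbc).
Qed.
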